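(* Let $\widehat{\mathscr{O}}$ be a commutative local principal ideal ring, complete with respect to its unique maximal ideal $\mathfrak{m}=(\pi)$, with residue field $k$ of characteristic other than $2$. Let $A\in\mathrm{M}_n(\widehat{\mathscr{O}})$ be cyclic, and let $F\in\widehat{\mathscr{O}}[x_1,\dots,x_m]$ (commuting variables) be a monic polynomial of degree $d$, with reduction $\overline{F}\in k[x_1,\dots,x_m]$. Suppose there is $\widetilde{\mathbf B}=(\widetilde{B}_1,\dots,\widetilde{B}_m)\in\mathrm{M}_n(k)^m$ with $\widetilde B_i\widetilde B_j=\widetilde B_j\widetilde B_i$ for all $i,j$, such that $\overline{F}(\widetilde{\mathbf B})=\overline{A}$, and suppose that for some $1\le r\le m$ one has $\frac{\partial \overline F}{\partial x_i}\big|_{\widetilde{\mathbf B}}\in\mathrm{GL}_n(k)$ for $i=1,\dots,r$ and $\frac{\partial \overline F}{\partial x_i}\big|_{\widetilde{\mathbf B}}=0\in\mathrm{M}_n(k)$ for $i=r+1,\dots,m$. Then there exists a tuple $\mathbf B=(B_1,\dots,B_m)\in\mathrm{M}_n(\widehat{\mathscr{O}})^m$ of pairwise commuting matrices such that $\overline{B_i}=\widetilde B_i$ for each $i=1,\dots,m$ and $F(\mathbf B)=A$.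
   Context: Bars denote reduction modulo $\mathfrak m$ (entrywise for matrices, coefficientwise for polynomials). $A\in\mathrm{M}_n(\widehat{\mathscr O})$ is called cyclic if $\overline{A}\in\mathrm{M}_n(k)$ is cyclic, i.e. $k^n$ is a cyclic $k[t]$-module via $\overline A$. Completeness means $\widehat{\mathscr O}\to\varprojlim_j\widehat{\mathscr O}/\mathfrak m^j$ is an isomorphism. Evaluation of a polynomial in commuting variables at a tuple of pairwise commuting matrices is by substitution. *)

From HB Require Import structures.
From mathcomp Require Import all_boot all_order all_algebra.
From mathcomp Require Import mpoly.
Set Implicit Arguments. Unset Strict Implicit. Unset Printing Implicit Defensive.
Import Order.TTheory GRing.Theory.
Local Open Scope ring_scope.

Section Ideals.
Variable R : comNzRingType.

Definition is_ideal (I : R -> Prop) : Prop :=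
  I 0 /\ (forall x y, I x -> I y -> I (x + y)) /\ (forall a x, I x -> I (a * x)).

Definition proper_ideal (I : R -> Prop) : Prop := is_ideal I /\ ~ I 1.

Definition maximal_ideal (I : R -> Prop) : Prop :=
  proper_ideal I /\
  forall J, proper_ideal J -> (forall x, I x -> J x) -> forall x, J x -> I x.

Definition gen_ideal (a : R) : R -> Prop := fun x => exists c, x = c * a.

Definition principal_ideal_ring : Prop :=
  forall I, is_ideal I -> exists a, forall x, I x <-> gen_ideal a x.

Definition local_ring_with_max (m : R -> Prop) : Prop :=
  maximal_ideal m /\ forall J, maximal_ideal J -> forall x, J x <-> m x.

(* completeness w.r.t. m = (pi): R -> lim_j R/(pi^j) is bijective.
   An element of the inverse limit is represented by a sequence s with
   s (j+1) = s j mod pi^j; injectivity and surjectivity are spelled out. *)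
Definition complete_wrt (pi : R) : Prop :=
  (forall x y, (forall j, gen_ideal (pi ^+ j) (x - y)) -> x = y) /\
  (forall s : nat -> R, (forall j, gen_ideal (pi ^+ j) (s j.+1 - s j)) ->
     exists x, forall j, gen_ideal (pi ^+ j) (x - s j)).

End Ideals.

Definition cyclic_mx (k : fieldType) (n : nat) (A : 'M[k]_n) : Prop :=
  exists v : 'cV[k]_n, forall w : 'cV[k]_n,
    exists p : {poly k}, w = (\sum_(i < size p) p`_i *: A ^+ i) *m v.

Definition mx_eval (R : comNzRingType) (m n : nat) (F : {mpoly R[m]})
  (B : 'I_m -> 'M[R]_n) : 'M[R]_n :=
  \sum_(mo <- msupp F) F@_mo *: \prod_(i < m) (B i) ^+ (mo i).

From HB Require Import structures.
From mathcomp Require Import all_boot all_order all_algebra.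
From mathcomp Require Import mpoly.
From mathcomp Require Import ring.
Set Implicit Arguments.
Unset Strict Implicit.
Unset Printing Implicit Defensive.
Import Order.TTheory GRing.Theory.
Local Open Scope ring_scope.

(* Because the reduction of A is cyclic, every matrix commuting with it is a
   polynomial in it; hence the B~_i and the inverse of the partial derivative
   dF/dx_0 at B~ lift to polynomials p_i and e in A.  Keeping B_i = p_i(A) for
   i <> 0, Newton's iteration x |-> x - G(x) e for
   G(x) = F(x, p_1, ..., p_(m-1)) - t runs in the commutative ring O[t], where
   each step gains one power of pi in the matrix G(x)(A).  Completeness makes
   the matrices x_j(A) converge to a B_0 that commutes with every p(A) and
   solves F(B) = A. *)

Section PiDivisibility.
Variables (O : comNzRingType) (pi : O).

Definition pi_dvd {V : lmodType O} (j : nat) (v : V) : Prop :=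
  exists w, v = pi ^+ j *: w.

Section Module.
Variable V : lmodType O.
Implicit Types u v : V.

Lemma pi_dvd0 j : pi_dvd j (0 : V).
Proof. by exists 0; rewrite scaler0. Qed.

Lemma pi_dvdD j u v : pi_dvd j u -> pi_dvd j v -> pi_dvd j (u + v).
Proof. by move=> [u' ->] [v' ->]; exists (u' + v'); rewrite scalerDr. Qed.

Lemma pi_dvdN j v : pi_dvd j v -> pi_dvd j (- v).
Proof. by move=> [v' ->]; exists (- v'); rewrite scalerN. Qed.

Lemma pi_dvdB j u v : pi_dvd j u -> pi_dvd j v -> pi_dvd j (u - v).
Proof. by move=> pu /pi_dvdN; apply: pi_dvdD. Qed.

Lemma pi_dvd_leq i j v : (i <= j)%N -> pi_dvd j v -> pi_dvd i v.
Proof.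
move=> /subnK <- [w ->]; exists (pi ^+ (j - i) *: w).
by rewrite scalerA -exprD addnC.
Qed.

End Module.

Section Algebra.
Variable S : algType O.
Implicit Types x y : S.

Lemma pi_dvdMl j x y : pi_dvd j y -> pi_dvd j (x * y).
Proof. by move=> [w ->]; exists (x * w); rewrite scalerAr. Qed.

Lemma pi_dvdMr j x y : pi_dvd j x -> pi_dvd j (x * y).
Proof. by move=> [w ->]; exists (w * y); rewrite scalerAl. Qed.

Lemma pi_dvdM i j x y : pi_dvd i x -> pi_dvd j y -> pi_dvd (i + j) (x * y).
Proof.
move=> [u ->] [v ->]; exists (u * v).
by rewrite -scalerAl -scalerAr scalerA -exprD.
Qed.

Lemma pi_dvd_mulB j x x' y y' :
  pi_dvd j (x - x') -> pi_dvd j (y - y') -> pi_dvd j (x * y - x' * y').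
Proof.
move=> dx dy; have -> : x * y - x' * y' = (x - x') * y + x' * (y - y').
  by rewrite mulrBl mulrBr addrA subrK.
by apply: pi_dvdD; [apply: pi_dvdMr | apply: pi_dvdMl].
Qed.

Lemma pi_dvd_exprB j x x' a :
  pi_dvd j (x - x') -> pi_dvd j (x ^+ a - x' ^+ a).
Proof.
move=> dx; elim: a => [|a IHa]; first by rewrite !expr0 subrr; apply: pi_dvd0.
by rewrite !exprS; apply: pi_dvd_mulB.
Qed.

Lemma pi_dvd_mmapB n (R : nzRingType) (f : R -> S) (h h' : 'I_n -> S)
    (p : {mpoly R[n]}) j :
  (forall i, pi_dvd j (h i - h' i)) -> pi_dvd j (mmap f h p - mmap f h' p).
Proof.
move=> dh; rewrite /mmap -sumrB.
apply: (big_ind (pi_dvd j)) => [|u v|mo _]; [exact: pi_dvd0 | exact: pi_dvdD |].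
rewrite -mulrBr; apply: pi_dvdMl.
apply: (big_ind2 (fun a b => pi_dvd j (a - b))) => [|a a' b b'|i _].
- by rewrite subrr; apply: pi_dvd0.
- exact: pi_dvd_mulB.
- exact: pi_dvd_exprB.
Qed.

End Algebra.
End PiDivisibility.

Section MatrixCompletion.
Variables (O : comNzRingType) (pi : O).

Lemma pi_dvd_mxP p q j (X : 'M[O]_(p, q)) :
  pi_dvd pi j X <-> forall a b, gen_ideal (pi ^+ j) (X a b).
Proof.
split=> [[W ->] a b | dX]; first by exists (W a b); rewrite mxE mulrC.
have [c Hc] := fin_all_exists (fun ab : 'I_p * 'I_q => dX ab.1 ab.2).
by exists (\matrix_(a, b) c (a, b)); apply/matrixP => a b; rewrite !mxE (Hc (a, b)) mulrC.
Qed.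

Lemma map_mx_eq0_pi_dvd (k : nzRingType) (red : {rmorphism O -> k}) :
  (forall x, red x = 0 <-> gen_ideal pi x) ->
  forall p q (X : 'M[O]_(p, q)), map_mx red X = 0 <-> pi_dvd pi 1 X.
Proof.
move=> ker p q X; rewrite pi_dvd_mxP expr1; split=> [/matrixP X0 a b | dX].
  by apply/ker; have := X0 a b; rewrite !mxE.
by apply/matrixP => a b; rewrite !mxE; apply/ker.
Qed.

Hypothesis complete : complete_wrt pi.

Lemma mx_pi_separated p q (X : 'M[O]_(p, q)) : (forall j, pi_dvd pi j X) -> X = 0.
Proof.
move=> dX; apply/matrixP => a b; rewrite mxE; apply: complete.1 => j.
by rewrite subr0; apply: (pi_dvd_mxP _ _).1 (dX j) a b.
Qed.

Lemma mx_pi_limit p q (Y : nat -> 'M[O]_(p, q)) :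
  (forall j, pi_dvd pi j (Y j.+1 - Y j)) ->
  exists X, forall j, pi_dvd pi j (X - Y j).
Proof.
move=> dY.
have lim (ab : 'I_p * 'I_q) : exists x, forall j, gen_ideal (pi ^+ j) (x - Y j ab.1 ab.2).
  by apply: complete.2 => j; have := (pi_dvd_mxP _ _).1 (dY j) ab.1 ab.2; rewrite !mxE.
have [x Hx] := fin_all_exists lim.
exists (\matrix_(a, b) x (a, b)) => j.
by apply/pi_dvd_mxP => a b; rewrite !mxE; apply: Hx (a, b) j.
Qed.

Lemma mx_pi_limit_comm n (X M : 'M[O]_n.+1) (Y : nat -> 'M[O]_n.+1) :
  (forall j, pi_dvd pi j (X - Y j)) -> (forall j, GRing.comm (Y j) M) ->
  GRing.comm X M.
Proof.
move=> dX cY; apply/eqP; rewrite -subr_eq0; apply/eqP/mx_pi_separated => j.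
have -> : X * M - M * X = (X - Y j) * M - M * (X - Y j).
  by rewrite mulrBl mulrBr (cY j) opprB addrA subrK.
by apply: pi_dvdB; [apply: pi_dvdMr | apply: pi_dvdMl].
Qed.

End MatrixCompletion.

Section Newton.
Variables (O : comNzRingType) (pi : O) (R : comNzRingType) (S : algType O).
Variables (phi : {rmorphism R -> S}) (G D : R -> R) (e : R).
Hypothesis G_taylor : forall x y, exists q, G (x + y) = G x + y * D x + y ^+ 2 * q.
Hypothesis D_taylor : forall x y, exists q, D (x + y) = D x + y * q.

Local Notation J j x := (pi_dvd pi j (phi x)).

Definition newton_seq (x1 : R) (j : nat) : R := iter j (fun x => x - G x * e) x1.

Lemma newton_step j x : J j.+1 (G x) -> J 1 (1 - D x * e) ->
  J j.+2 (G (x - G x * e)) /\ J 1 (1 - D (x - G x * e) * e).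
Proof.
move=> JG JD; set y := - (G x * e).
have Jy : J j.+1 y by rewrite rmorphN rmorphM; apply/pi_dvdN/pi_dvdMr.
split.
- have [q ->] := G_taylor x y.
  have -> : G x + y * D x + y ^+ 2 * q = G x * (1 - D x * e) + y * y * q.
    by rewrite /y; ring.
  rewrite rmorphD !rmorphM; apply: pi_dvdD; first by rewrite -addn1; apply: pi_dvdM.
  by apply: pi_dvdMr; apply: pi_dvd_leq (pi_dvdM Jy Jy); rewrite addnS ltnS leq_addr.
- have [q ->] := D_taylor x y.
  have -> : 1 - (D x + y * q) * e = (1 - D x * e) - y * (q * e) by ring.
  rewrite rmorphB rmorphM; apply: pi_dvdB JD _; apply: pi_dvdMr.
  exact: pi_dvd_leq Jy.
Qed.

Section Iteration.
Variable x1 : R.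
Hypotheses (G_x1 : J 1 (G x1)) (D_x1 : J 1 (1 - D x1 * e)).

Lemma newton_seq_approx j :
  J j.+1 (G (newton_seq x1 j)) /\ J 1 (1 - D (newton_seq x1 j) * e).
Proof. by elim: j => [|j [JG JD]] //=; apply: newton_step. Qed.

Lemma newton_seq_cauchy j : J j.+1 (newton_seq x1 j.+1 - newton_seq x1 j).
Proof.
rewrite [newton_seq x1 j.+1]iterS -/(newton_seq x1 j) addrC addKr rmorphN rmorphM.
by apply/pi_dvdN/pi_dvdMr; case: (newton_seq_approx j).
Qed.

End Iteration.
End Newton.

Section MmapFacts.
Variable n : nat.

Lemma eq_mmap (R S : nzRingType) (f f' : R -> S) (h h' : 'I_n -> S) (p : {mpoly R[n]}) :
  f =1 f' -> h =1 h' -> mmap f h p = mmap f' h' p.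
Proof.
move=> ef eh; apply: eq_bigr => mo _; rewrite ef; congr (_ * _).
by apply: eq_bigr => i _; rewrite eh.
Qed.

Lemma rmorph_mmap (R S S' : nzRingType) (g : {rmorphism S -> S'}) (f : R -> S)
    (h : 'I_n -> S) (p : {mpoly R[n]}) :
  g (mmap f h p) = mmap (g \o f) (g \o h) p.
Proof.
rewrite rmorph_sum; apply: eq_bigr => mo _; rewrite rmorphM rmorph_prod.
by congr (_ * _); apply: eq_bigr => i _; rewrite rmorphXn.
Qed.

Lemma mmap_map_mpoly (R R' S : nzRingType) (g : {rmorphism R -> R'})
    (f : {rmorphism R' -> S}) (h : 'I_n -> S) (p : {mpoly R[n]}) :
  mmap f h (map_mpoly g p) = mmap (f \o g) h p.
Proof.
pose b := maxn (msize p) (msize (map_mpoly g p)).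
rewrite (mmapE b) ?leq_maxr // (mmapE b) ?leq_maxl //.
by apply: eq_bigr => mo _; rewrite mcoeff_map_mpoly.
Qed.

Lemma commr_mmap (R S : nzRingType) (f : R -> S) (h : 'I_n -> S) (p : {mpoly R[n]}) x :
  (forall c, GRing.comm x (f c)) -> (forall i, GRing.comm x (h i)) ->
  GRing.comm x (mmap f h p).
Proof.
move=> cf ch; apply: commr_sum => mo _; apply: commrM => //.
by apply: commr_prod => i _; apply: commrX.
Qed.

Lemma mderiv_map_mpoly (R S : nzRingType) (g : {rmorphism R -> S}) i (p : {mpoly R[n]}) :
  map_mpoly g (mderiv i p) = mderiv i (map_mpoly g p).
Proof.
apply/mpolyP => mo.
by rewrite mcoeff_map_mpoly !mcoeff_mderiv mcoeff_map_mpoly raddfMn.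
Qed.

End MmapFacts.

Lemma exprD_taylor (S : comNzRingType) (x y : S) a :
  exists q, (x + y) ^+ a = x ^+ a + y * (a%:R * x ^+ a.-1) + y ^+ 2 * q.
Proof.
elim: a => [|a [q IHa]]; first by exists 0; rewrite !expr0 !mul0r !mulr0 !addr0.
have xa : x * (a%:R * x ^+ a.-1) = a%:R * x ^+ a.
  by case: a {IHa} => [|a]; rewrite ?mul0r ?mulr0 // mulrCA -exprS.
exists (x * q + a%:R * x ^+ a.-1 + y * q).
have -> : (a.+1)%:R * x ^+ a = x * (a%:R * x ^+ a.-1) + x ^+ a by rewrite xa -natr1; ring.
rewrite exprS IHa [x ^+ a.+1]exprS.
by ring.
Qed.

Section MultivariateTaylor.
Variables (n : nat) (S : comNzRingType) (h : 'I_n -> S) (i0 : 'I_n) (x y : S).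
Local Notation hx z := [eta h with i0 |-> z].

Lemma mmap1_taylor mo : exists q,
  mmap1 (hx (x + y)) mo =
    mmap1 (hx x) mo + y * ((mo i0)%:R * mmap1 (hx x) (mo - U_(i0))%MM) + y ^+ 2 * q.
Proof.
have [q Hq] := exprD_taylor x y (mo i0).
pose rest := \prod_(i < n | i != i0) h i ^+ mo i.
have restE z : \prod_(i < n | i != i0) hx z i ^+ mo i = rest.
  by apply: eq_bigr => i /negbTE /= ->.
have restU : \prod_(i < n | i != i0) hx x i ^+ (mo - U_(i0))%MM i = rest.
  by apply: eq_bigr => i ne /=; rewrite (negbTE ne) mnmBE mnm1E eq_sym (negbTE ne) subn0.
exists (q * rest).
rewrite /mmap1 (bigD1 i0) //= [X in _ = X + _ + _](bigD1 i0) //=.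
rewrite [X in _ = _ + y * (_ * X) + _](bigD1 i0) //= !eqxx !restE restU.
rewrite mnmBE mnm1E eqxx subn1 Hq.
by ring.
Qed.

Lemma mmap_taylor (R : nzRingType) (f : {rmorphism R -> S}) (p : {mpoly R[n]}) :
  exists q, mmap f (hx (x + y)) p =
    mmap f (hx x) p + y * mmap f (hx x) (mderiv i0 p) + y ^+ 2 * q.
Proof.
elim/mpolyind: p => [|c mo p _ _ [q Hq]].
  by exists 0; rewrite mderiv0 !mmap0 !mulr0 !addr0.
have [q1 Hq1] := mmap1_taylor mo.
exists (f c * q1 + q).
rewrite mderivD mderivZ mderivX !mmapD !mmapZ !mmapX Hq Hq1 rmorph_nat.
by ring.
Qed.

End MultivariateTaylor.

Lemma horner_mx_coef (R : comNzRingType) n (A : 'M[R]_n.+1) (p : {poly R}) :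
  horner_mx A p = \sum_(i < size p) p`_i *: A ^+ i.
Proof.
rewrite -[in LHS](coefK p) poly_def rmorph_sum; apply: eq_bigr => i _.
by rewrite /= horner_mxZ rmorphXn; congr (_ *: _ ^+ _); apply: horner_mx_X.
Qed.

Lemma horner_mx_mmap (R : comNzRingType) n m (A : 'M[R]_n.+1)
    (h : 'I_m -> {poly R}) (P : {mpoly R[m]}) :
  horner_mx A (mmap polyC h P) = mmap scalar_mx (horner_mx A \o h) P.
Proof. by rewrite rmorph_mmap; apply: eq_mmap => // c; apply: horner_mx_C. Qed.

Lemma mx_evalE (R : comNzRingType) n m (P : {mpoly R[m]}) (B : 'I_m -> 'M[R]_n.+1) :
  mx_eval P B = mmap scalar_mx B P.
Proof. by apply: eq_bigr => mo _; rewrite -mul_scalar_mx. Qed.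

Lemma cyclic_mx_centralizer (K : fieldType) n (A X : 'M[K]_n.+1) :
  cyclic_mx A -> GRing.comm X A -> exists q, X = horner_mx A q.
Proof.
case=> v gen_v cXA; have [q Xv] := gen_v (X *m v).
exists q; rewrite -horner_mx_coef in Xv.
suff Xw (w : 'cV_n.+1) : X *m w = horner_mx A q *m w.
  apply/matrixP => a b; have := congr1 (fun M : 'cV_n.+1 => M a 0) (Xw (delta_mx b 0)).
  by rewrite -!colE !mxE.
have [p ->] := gen_v w; rewrite -horner_mx_coef !mulmxA.
rewrite (comm_mx_horner p cXA) -!mulmxA Xv !mulmxA.
by congr (_ *m _); apply: comm_horner_mx2.
Qed.

Section HenselLift.
Variables (O : comNzRingType) (pi : O) (k : fieldType) (red : {rmorphism O -> k}).
Hypotheses (complete : complete_wrt pi) (red_surj : forall y, exists x, red x = y)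
  (red_ker : forall x, red x = 0 <-> gen_ideal pi x).
Variables (n m : nat) (A : 'M[O]_n.+1) (F : {mpoly O[m]}) (Bt : 'I_m -> 'M[k]_n.+1).
Variable i0 : 'I_m.
Hypotheses (A_cyclic : cyclic_mx (map_mx red A))
  (Bt_comm : forall i j, GRing.comm (Bt i) (Bt j))
  (F_Bt : mmap scalar_mx Bt (map_mpoly red F) = map_mx red A)
  (dF_unit : mmap scalar_mx Bt (mderiv i0 (map_mpoly red F)) \is a GRing.unit).

Lemma lift_poly (q : {poly k}) : exists p, map_poly red p = q.
Proof.
elim/poly_ind: q => [|q c [p Hp]]; first by exists 0; rewrite rmorph0.
have [c0 Hc] := red_surj c; exists (p * 'X + c0%:P).
by rewrite rmorphD rmorphM /= map_polyX map_polyC Hp /= Hc.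
Qed.

Lemma lift_centralizer X :
  GRing.comm X (map_mx red A) -> exists q, map_mx red (horner_mx A q) = X.
Proof.
move=> /(cyclic_mx_centralizer A_cyclic) [q ->].
by have [p Hp] := lift_poly q; exists p; rewrite map_horner_mx Hp.
Qed.

Lemma map_horner_mmap (h : 'I_m -> {poly O}) (P : {mpoly O[m]}) :
  map_mx red (horner_mx A (mmap polyC h P)) =
  mmap scalar_mx (fun i => map_mx red (horner_mx A (h i))) (map_mpoly red P).
Proof.
rewrite horner_mx_mmap rmorph_mmap mmap_map_mpoly.
by apply: eq_mmap => // c /=; rewrite map_scalar_mx.
Qed.

Section Approximation.
Variables (p : 'I_m -> {poly O}) (e : {poly O}).
Local Notation hx x := [eta p with i0 |-> x].
Local Notation G x := (mmap polyC (hx x) F - 'X).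
Local Notation D x := (mmap polyC (hx x) (mderiv i0 F)).
Hypotheses (Bt_p : forall i, map_mx red (horner_mx A (p i)) = Bt i)
  (e_inv : map_mx red (horner_mx A e) =
     (mmap scalar_mx Bt (mderiv i0 (map_mpoly red F)))^-1).

Lemma G_taylor x y : exists q, G (x + y) = G x + y * D x + y ^+ 2 * q.
Proof. by have [q ->] := mmap_taylor p i0 x y polyC F; exists q; ring. Qed.

Lemma D_taylor x y : exists q, D (x + y) = D x + y * q.
Proof.
have [q ->] := mmap_taylor p i0 x y polyC (mderiv i0 F).
by exists (mmap polyC (hx x) (mderiv i0 (mderiv i0 F)) + y * q); ring.
Qed.

Lemma map_horner_mmap_lift (P : {mpoly O[m]}) :
  map_mx red (horner_mx A (mmap polyC (hx (p i0)) P)) = mmap scalar_mx Bt (map_mpoly red P).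
Proof.
by rewrite map_horner_mmap; apply: eq_mmap => // i /=; case: eqP => [->|]; rewrite Bt_p.
Qed.

Lemma newton_start :
  pi_dvd pi 1 (horner_mx A (G (p i0))) /\ pi_dvd pi 1 (horner_mx A (1 - D (p i0) * e)).
Proof.
split; apply/(map_mx_eq0_pi_dvd red_ker).
  by rewrite rmorphB /= horner_mx_X map_mxB map_horner_mmap_lift F_Bt subrr.
by rewrite !rmorphB !rmorph1 !rmorphM /= map_horner_mmap_lift e_inv mderiv_map_mpoly
  mulrV ?subrr.
Qed.

Lemma horner_G x :
  horner_mx A (G x) = mmap scalar_mx [eta horner_mx A \o p with i0 |-> horner_mx A x] F - A.
Proof.
rewrite rmorphB /= horner_mx_X horner_mx_mmap; congr (_ - _).
by apply: eq_mmap => // i /=; case: eqP.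
Qed.

Lemma newton_lift : exists B : 'I_m -> 'M[O]_n.+1,
  [/\ forall i j, GRing.comm (B i) (B j), forall i, map_mx red (B i) = Bt i
    & mmap scalar_mx B F = A].
Proof.
have [G_p D_p] := newton_start.
pose xs := newton_seq (fun x => G x) e (p i0).
pose Y j := horner_mx A (xs j).
have approx j : pi_dvd pi j.+1 (horner_mx A (G (xs j))).
  by case: (newton_seq_approx G_taylor D_taylor G_p D_p j).
have cauchy j : pi_dvd pi j.+1 (Y j.+1 - Y j).
  by rewrite -rmorphB; apply: (newton_seq_cauchy G_taylor D_taylor G_p D_p).
have [X HX] := mx_pi_limit complete (fun j => pi_dvd_leq (leqnSn j) (cauchy j)).
have X_comm q : GRing.comm X (horner_mx A q).
  by apply: (mx_pi_limit_comm complete HX) => j; apply: comm_horner_mx2.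
exists [eta horner_mx A \o p with i0 |-> X]; split.
- move=> i j /=; do 2 case: eqP => _ //;
    by [apply: X_comm | apply/commr_sym/X_comm | apply: comm_horner_mx2].
- move=> i /=; case: eqP => [->|_]; last exact: Bt_p.
  apply/eqP; rewrite -(Bt_p i0) -subr_eq0 -map_mxB; apply/eqP/(map_mx_eq0_pi_dvd red_ker).
  by rewrite -(subrK (Y 1) X) -addrA; apply: pi_dvdD (HX 1) (cauchy 0).
- apply/eqP; rewrite -subr_eq0; apply/eqP/(mx_pi_separated complete) => j.
  rewrite -(subrK (mmap scalar_mx [eta horner_mx A \o p with i0 |-> Y j] F)
    (mmap _ _ F)) -addrA -horner_G.
  apply: pi_dvdD; last exact: pi_dvd_leq (approx j).
  apply: pi_dvd_mmapB => i /=; case: eqP => _; first exact: HX.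
  by rewrite subrr; apply: pi_dvd0.
Qed.

End Approximation.

Lemma hensel_lift : exists B : 'I_m -> 'M[O]_n.+1,
  [/\ forall i j, GRing.comm (B i) (B j), forall i, map_mx red (B i) = Bt i
    & mmap scalar_mx B F = A].
Proof.
have Bt_A i : GRing.comm (Bt i) (map_mx red A).
  by rewrite -F_Bt; apply: commr_mmap => [c|j]; [apply: comm_mx_scalar | apply: Bt_comm].
have [p Bt_p] := fin_all_exists (fun i => lift_centralizer (Bt_A i)).
have A_dF : GRing.comm (map_mx red A) (mmap scalar_mx Bt (mderiv i0 (map_mpoly red F))).
  by apply: commr_mmap => [c|j]; [apply: comm_mx_scalar | apply/commr_sym/Bt_A].
have [e e_inv] := lift_centralizer (commr_sym (commrV A_dF)).
exact: newton_lift Bt_p e_inv.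
Qed.

End HenselLift.

Theorem theorem2p5 (O : comUnitRingType) (pi : O) (k : fieldType)
  (red : {rmorphism O -> k}) (n m r d : nat)
  (A : 'M[O]_n) (F : {mpoly O[m]}) (Bt : 'I_m -> 'M[k]_n) :
  local_ring_with_max (gen_ideal pi) ->
  principal_ideal_ring O ->
  complete_wrt pi ->
  (forall y : k, exists x : O, red x = y) ->
  (forall x : O, red x = 0 <-> gen_ideal pi x) ->
  ~~ (2%N \in [pchar k]) ->
  cyclic_mx (map_mx red A) ->
  mleadc F = 1 -> msize F = d.+1 ->
  (forall i j, Bt i *m Bt j = Bt j *m Bt i) ->
  mx_eval (map_mpoly red F) Bt = map_mx red A ->
  (1 <= r <= m)%N ->
  (forall i : 'I_m, (i < r)%N -> mx_eval (mderiv i (map_mpoly red F)) Bt \in unitmx) ->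
  (forall i : 'I_m, (r <= i)%N -> mx_eval (mderiv i (map_mpoly red F)) Bt = 0) ->
  exists B : 'I_m -> 'M[O]_n,
    (forall i j, B i *m B j = B j *m B i) /\
    (forall i, map_mx red (B i) = Bt i) /\
    mx_eval F B = A.
Proof.
move=> _ _ complete red_surj red_ker _ A_cyclic _ _ Bt_comm F_Bt /andP[r_gt0 r_le_m] dF_unit _.
case: n A Bt A_cyclic Bt_comm F_Bt dF_unit => [|n] A Bt A_cyclic Bt_comm F_Bt dF_unit.
  by exists (fun=> 0); do !split=> *; rewrite [LHS]flatmx0 [RHS]flatmx0.
pose i0 := Ordinal (leq_trans r_gt0 r_le_m).
have dF0_unit := dF_unit i0 r_gt0.
rewrite mx_evalE in dF0_unit; rewrite mx_evalE in F_Bt.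
have [B [B_comm B_red F_B]] :=
  hensel_lift complete red_surj red_ker A_cyclic Bt_comm F_Bt dF0_unit.
by exists B; rewrite mx_evalE.
Qed.
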